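(* There is a constant $C$ such that for every $\ell\in\frac12\mathbb{N}$ and every $p\in\{-\ell,-\ell+1,\dots,\ell\}$, \[|c_p^\ell|\le C\min\left((1+\ell)^{-\frac14},\ \left||p|-\tfrac{\ell}{\sqrt2}\right|^{-\frac12}\right).\]
   Context: For $\ell\in\frac12\mathbb{N}=\{0,\frac12,1,\frac32,\dots\}$ and $p\in\{-\ell,-\ell+1,\dots,\ell\}$ (so $\ell\pm p$ are non-negative integers), $c_p^\ell=2^{-\ell}\int_0^{2\pi}(1+r^{-1}e^{-i\varphi})^{\ell-p}(1-re^{i\varphi})^{\ell+p}\frac{d\varphi}{2\pi}$, a quantity independent of $r>0$ (e.g. take $r=1$). By convention $0^{-1/2}=+\infty$, so the minimum is the first term when $|p|=\ell/\sqrt2$. *)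

From Stdlib Require Import Reals.
From Coquelicot Require Import Coquelicot.
Open Scope R_scope.

Definition eiphi (phi : R) : C := (cos phi, sin phi).
Definition emiphi (phi : R) : C := (cos phi, - sin phi).

(* integrand at r = 1, with ell - p = a and ell + p = b *)
Definition cint (a b : nat) (phi : R) : C :=
  Cmult (Cpow (Cplus 1 (emiphi phi)) a) (Cpow (Cminus 1 (eiphi phi)) b).

(* c_p^ell with ell = (a+b)/2, p = (b-a)/2, i.e. a = ell - p, b = ell + p *)
Definition ell_of (a b : nat) : R := (INR a + INR b) / 2.
Definition p_of (a b : nat) : R := (INR b - INR a) / 2.

Definition cpl (a b : nat) : C :=
  scal (Rpower 2 (- ell_of a b) / (2 * PI))
       (RInt (V := C_R_CompleteNormedModule) (cint a b) 0 (2 * PI)).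

(* min((1+ell)^{-1/4}, ||p| - ell/sqrt 2|^{-1/2}) with 0^{-1/2} = +oo *)
Definition minbound (l p : R) : R :=
  let d := Rabs (Rabs p - l / sqrt 2) in
  if Req_EM_T d 0 then Rpower (1 + l) (-1/4)
  else Rmin (Rpower (1 + l) (-1/4)) (Rpower d (-1/2)).

(* With [a = ell - p] and [b = ell + p], [c_p^ell] is [2 ^ (- ell)] times the constant
   coefficient of the Laurent polynomial [(1 + 1/z) ^ a (1 - z) ^ b], which can be computed on
   any circle [|z| = r].  When one of [a], [b] is at least nine times the other, the circle
   [r = 9] or [r = 1/9] already gives exponential decay.  Otherwise take the circle through the
   saddle points, [r = sqrt (a / b)]: there [2 ^ (- ell) |integrand|] is bounded by a Gaussian
   [exp (- min(a,b) (cos phi - x)^2 / 20)] with [x = (a - b) / (2 sqrt (a b))], and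
   [(cos phi - x)^2] grows at least like [(phi - psi)^4] and like [|1 - x^2| (phi - psi)^2]
   away from a suitable [psi].  Integrating the resulting Lorentzian majorants gives
   [|c| <~ min(a,b)^(-1/4)] and [|c| <~ (min(a,b) |1 - x^2|)^(-1/2)], and
   [||p| - ell / sqrt 2| <= ell |1 - x^2|]. *)

From Stdlib Require Import Reals Lra Lia ZArith.
From Coquelicot Require Import Coquelicot.
Open Scope R_scope.

Definition cexpi (m : Z) (phi : R) : C := (cos (IZR m * phi), sin (IZR m * phi)).

Definition cint_r (r : R) (a b : nat) (m : Z) (phi : R) : C :=
  Cmult (cexpi m phi)
    (Cmult (Cpow (Cplus 1 (Cmult (RtoC (/ r)) (emiphi phi))) a)
           (Cpow (Cminus 1 (Cmult (RtoC r) (eiphi phi))) b)).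

(* [laurent_coef a b m] is the coefficient of [z ^ (- m)] in the Laurent
   polynomial [(1 + 1/z) ^ a * (1 - z) ^ b]. *)
Fixpoint laurent_coef0 (b : nat) (m : Z) : R :=
  match b with
  | O => if Z.eqb m 0 then 1 else 0
  | S b => laurent_coef0 b m - laurent_coef0 b (m + 1)
  end.

Fixpoint laurent_coef (a b : nat) (m : Z) : R :=
  match a with
  | O => laurent_coef0 b m
  | S a => laurent_coef a b m + laurent_coef a b (m - 1)
  end.

Lemma cexpi_mul_emiphi m phi : Cmult (cexpi m phi) (emiphi phi) = cexpi (m - 1) phi.
Proof.
  unfold cexpi, emiphi, Cmult; simpl.
  rewrite minus_IZR, Rmult_minus_distr_r, Rmult_1_l, cos_minus, sin_minus.
  f_equal; ring.
Qed.

Lemma cexpi_mul_eiphi m phi : Cmult (cexpi m phi) (eiphi phi) = cexpi (m + 1) phi.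
Proof.
  unfold cexpi, eiphi, Cmult; simpl.
  rewrite plus_IZR, Rmult_plus_distr_r, Rmult_1_l, cos_plus, sin_plus.
  f_equal; ring.
Qed.

Lemma sin_IZR_mul_2PI m : sin (IZR m * (2 * PI)) = 0.
Proof. apply sin_eq_0_1. exists (2 * m)%Z. rewrite mult_IZR. ring. Qed.

Lemma cos_IZR_mul_2PI m : cos (IZR m * (2 * PI)) = 1.
Proof.
  replace (IZR m * (2 * PI)) with (2 * (IZR m * PI)) by ring.
  rewrite cos_2a_sin, sin_eq_0_1 by (exists m; reflexivity).
  unfold Rsqr. ring.
Qed.

Lemma is_RInt_val_eq {V : NormedModule R_AbsRing} (f : R -> V) a b (l l' : V) :
  is_RInt f a b l -> l = l' -> is_RInt f a b l'.
Proof. intros H <-. exact H. Qed.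

Lemma is_RInt_cos_mul m :
  is_RInt (fun x => cos (IZR m * x)) 0 (2 * PI) (if Z.eqb m 0 then 2 * PI else 0).
Proof.
  destruct (Z.eqb_spec m 0) as [->|Hm].
  - eapply is_RInt_val_eq.
    + apply (is_RInt_ext (fun _ => 1)); [|apply (is_RInt_const (V := R_NormedModule))].
      intros x _. rewrite Rmult_0_l, cos_0. reflexivity.
    + unfold scal; simpl; unfold mult; simpl. ring.
  - assert (Hm' : IZR m <> 0) by (apply not_0_IZR; auto).
    eapply is_RInt_val_eq.
    + apply (is_RInt_derive (fun x => sin (IZR m * x) / IZR m)).
      * intros x _. auto_derive; auto. field; auto.
      * intros x _. apply (ex_derive_continuous (fun x => cos (IZR m * x))). auto_derive; auto.
    + simpl. rewrite sin_IZR_mul_2PI, Rmult_0_r, sin_0.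
      unfold minus, plus, opp; simpl. field. auto.
Qed.

Lemma is_RInt_sin_mul m : is_RInt (fun x => sin (IZR m * x)) 0 (2 * PI) 0.
Proof.
  destruct (Z.eqb_spec m 0) as [->|Hm].
  - eapply is_RInt_val_eq.
    + apply (is_RInt_ext (fun _ => 0)); [|apply (is_RInt_const (V := R_NormedModule))].
      intros x _. rewrite Rmult_0_l, sin_0. reflexivity.
    + unfold scal; simpl; unfold mult; simpl. ring.
  - assert (Hm' : IZR m <> 0) by (apply not_0_IZR; auto).
    eapply is_RInt_val_eq.
    + apply (is_RInt_derive (fun x => - cos (IZR m * x) / IZR m)).
      * intros x _. auto_derive; auto. field; auto.
      * intros x _. apply (ex_derive_continuous (fun x => sin (IZR m * x))). auto_derive; auto.
    + simpl. rewrite cos_IZR_mul_2PI, Rmult_0_r, cos_0.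
      unfold minus, plus, opp; simpl. field. auto.
Qed.

Lemma is_RInt_cexpi m :
  is_RInt (V := C_R_NormedModule) (cexpi m) 0 (2 * PI) (RtoC (if Z.eqb m 0 then 2 * PI else 0)).
Proof.
  apply (is_RInt_fct_extend_pair (U := R_NormedModule) (V := R_NormedModule) (cexpi m)).
  - apply is_RInt_cos_mul.
  - apply is_RInt_sin_mul.
Qed.

Lemma cint_r_0_0 r m phi : cint_r r 0 0 m phi = cexpi m phi.
Proof. unfold cint_r. simpl. ring. Qed.

Lemma cint_r_0_S r b m phi :
  cint_r r 0 (S b) m phi = minus (cint_r r 0 b m phi) (scal r (cint_r r 0 b (m + 1) phi)).
Proof.
  rewrite scal_R_Cmult. unfold cint_r. rewrite <- cexpi_mul_eiphi.
  change (Cpow ?z (S b)) with (Cmult z (Cpow z b)).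
  change (minus ?x ?y) with (Cminus x y). ring.
Qed.

Lemma cint_r_S r a b m phi :
  cint_r r (S a) b m phi = plus (cint_r r a b m phi) (scal (/ r) (cint_r r a b (m - 1) phi)).
Proof.
  rewrite scal_R_Cmult. unfold cint_r. rewrite <- cexpi_mul_emiphi.
  change (Cpow ?z (S a)) with (Cmult z (Cpow z a)).
  change (plus ?x ?y) with (Cplus x y). ring.
Qed.

Lemma is_RInt_cint_r r a b m : r <> 0 ->
  is_RInt (V := C_R_NormedModule) (cint_r r a b m) 0 (2 * PI)
    (RtoC (2 * PI * powerRZ r (- m) * laurent_coef a b m)).
Proof.
  intros Hr. revert m. induction a as [|a IHa]; [induction b as [|b IHb]|]; intros m.
  - eapply is_RInt_val_eq.
    + apply (is_RInt_ext _ _ _ _ _ (fun x _ => eq_sym (cint_r_0_0 r m x))), is_RInt_cexpi.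
    + simpl. destruct (Z.eqb_spec m 0) as [->|]; simpl; f_equal; ring.
  - eapply is_RInt_val_eq.
    + apply (is_RInt_ext _ _ _ _ _ (fun x _ => eq_sym (cint_r_0_S r b m x))).
      apply (is_RInt_minus (V := C_R_NormedModule)); [|apply (is_RInt_scal (V := C_R_NormedModule))];
        apply IHb.
    + rewrite scal_R_Cmult. simpl laurent_coef in *.
      rewrite Z.opp_add_distr, powerRZ_add by auto. simpl (powerRZ r (- 1)).
      change (minus ?x ?y) with (Cminus x y).
      unfold Cminus, Cplus, Copp, Cmult, RtoC; simpl. f_equal; field; auto.
  - eapply is_RInt_val_eq.
    + apply (is_RInt_ext _ _ _ _ _ (fun x _ => eq_sym (cint_r_S r a b m x))).
      apply (is_RInt_plus (V := C_R_NormedModule)); [|apply (is_RInt_scal (V := C_R_NormedModule))];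
        apply IHa.
    + rewrite scal_R_Cmult. simpl laurent_coef.
      replace (- (m - 1))%Z with (- m + 1)%Z by ring.
      rewrite powerRZ_add by auto.
      change (plus ?x ?y) with (Cplus x y).
      unfold Cplus, Cmult, RtoC; simpl. f_equal; field; auto.
Qed.

Lemma cint_eq_cint_r a b phi : cint a b phi = cint_r 1 a b 0 phi.
Proof.
  unfold cint, cint_r, cexpi. rewrite Rmult_0_l, cos_0, sin_0, Rinv_1.
  change (1, 0) with (RtoC 1). rewrite !Cmult_1_l. reflexivity.
Qed.

Lemma Cmod_cpl a b : Cmod (cpl a b) = Rpower 2 (- ell_of a b) * Rabs (laurent_coef a b 0).
Proof.
  assert (HPI := PI_RGT_0).
  assert (I := is_RInt_cint_r 1 a b 0 R1_neq_R0).
  unfold cpl. rewrite (is_RInt_unique (V := C_R_CompleteNormedModule) (cint a b) 0 (2 * PI)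
                        _ (is_RInt_ext _ _ _ _ _ (fun x _ => eq_sym (cint_eq_cint_r a b x)) I)).
  simpl powerRZ. rewrite scal_R_Cmult, Cmod_mult, !Cmod_R, Rmult_1_r, !Rabs_mult, Rabs_div by lra.
  rewrite (Rabs_right 2), (Rabs_right PI), (Rabs_right (2 * PI)), (Rabs_right (Rpower 2 _)) by (apply Rle_ge, Rlt_le, exp_pos || lra).
  field. lra.
Qed.

(* The [z ^ 0] coefficient can be read off on any circle [|z| = r]. *)
Lemma Cmod_cpl_le_RInt r a b (M : R -> R) lM : 0 < r ->
  (forall phi, 0 <= phi <= 2 * PI ->
     Rpower 2 (- ell_of a b) * Cmod (cint_r r a b 0 phi) <= M phi) ->
  is_RInt M 0 (2 * PI) lM -> Cmod (cpl a b) <= lM / (2 * PI).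
Proof.
  intros Hr HM IM. assert (HPI := PI_RGT_0).
  set (k := Rpower 2 (- ell_of a b)). assert (Hk : 0 < k) by apply exp_pos.
  assert (IM' : is_RInt (fun x => / k * M x) 0 (2 * PI) (/ k * lM))
    by exact (is_RInt_scal _ _ _ (/ k) _ IM).
  assert (Hpt : forall x, 0 <= x <= 2 * PI -> norm (V := C_R_NormedModule) (cint_r r a b 0 x) <= / k * M x).
  { intros x Hx. rewrite <- Cmod_norm. apply Rmult_le_reg_l with k; [exact Hk|].
    rewrite <- Rmult_assoc, Rinv_r, Rmult_1_l by lra. apply HM, Hx. }
  assert (Hle := norm_RInt_le _ _ 0 (2 * PI) _ _ ltac:(lra) Hpt
                   (is_RInt_cint_r r a b 0 (Rgt_not_eq _ _ Hr)) IM').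
  rewrite <- Cmod_norm, Cmod_R in Hle. simpl powerRZ in Hle.
  rewrite Rmult_1_r, Rabs_mult, Rabs_right in Hle by lra.
  rewrite Cmod_cpl. fold k.
  apply Rmult_le_reg_l with (2 * PI * / k); [apply Rmult_lt_0_compat; [lra | now apply Rinv_0_lt_compat]|].
  replace (2 * PI * / k * (k * Rabs (laurent_coef a b 0))) with (2 * PI * Rabs (laurent_coef a b 0))
    by (field; lra).
  replace (2 * PI * / k * (lM / (2 * PI))) with (/ k * lM) by (field; lra). exact Hle.
Qed.

Lemma Cmod_sqr (z : C) : Cmod z ^ 2 = fst z ^ 2 + snd z ^ 2.
Proof. unfold Cmod. rewrite pow2_sqrt; [reflexivity | nra]. Qed.

Lemma Cmod_1_plus_emiphi_sqr r phi : r <> 0 ->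
  Cmod (Cplus 1 (Cmult (RtoC (/ r)) (emiphi phi))) ^ 2 = 1 + 2 * cos phi / r + / r ^ 2.
Proof.
  intros Hr. rewrite Cmod_sqr. unfold emiphi, Cplus, Cmult, RtoC; simpl.
  field_simplify; [|exact Hr..]. rewrite <- (sin2_cos2 phi). unfold Rsqr. field. exact Hr.
Qed.

Lemma Cmod_1_minus_eiphi_sqr r phi :
  Cmod (Cminus 1 (Cmult (RtoC r) (eiphi phi))) ^ 2 = 1 - 2 * r * cos phi + r ^ 2.
Proof.
  rewrite Cmod_sqr. unfold eiphi, Cminus, Cplus, Copp, Cmult, RtoC; simpl.
  pose proof (sin2_cos2 phi) as E. unfold Rsqr in E. nra.
Qed.

Lemma Rpower2_opp_ell_sqr a b : Rpower 2 (- ell_of a b) ^ 2 = (/ 2) ^ a * (/ 2) ^ b.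
Proof.
  rewrite <- Rsqr_pow2. unfold Rsqr. rewrite <- Rpower_plus.
  replace (- ell_of a b + - ell_of a b) with (- (INR a + INR b)) by (unfold ell_of; field).
  rewrite Rpower_Ropp, Rpower_plus, !Rpower_pow, !pow_inv by lra.
  apply Rinv_mult.
Qed.

Lemma Cmod_cexpi_0 phi : Cmod (cexpi 0 phi) = 1.
Proof. unfold cexpi. rewrite Rmult_0_l, cos_0, sin_0. apply Cmod_1. Qed.

Lemma Rpower2_Cmod_cint_r_sqr r a b phi : r <> 0 ->
  (Rpower 2 (- ell_of a b) * Cmod (cint_r r a b 0 phi)) ^ 2 =
  ((1 + 2 * cos phi / r + / r ^ 2) / 2) ^ a * ((1 - 2 * r * cos phi + r ^ 2) / 2) ^ b.
Proof.
  intros Hr. unfold cint_r.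
  rewrite !Cmod_mult, !Cmod_pow, Cmod_cexpi_0, Rmult_1_l, !Rpow_mult_distr, Rpower2_opp_ell_sqr.
  rewrite <- !pow_mult, !(Nat.mul_comm _ 2), !pow_mult.
  rewrite Cmod_1_plus_emiphi_sqr, Cmod_1_minus_eiphi_sqr by exact Hr.
  unfold Rdiv. rewrite !(Rpow_mult_distr _ (/ 2)). ring.
Qed.

Lemma Cmod_cint_r_reflect r a b phi : r <> 0 ->
  Cmod (cint_r r a b 0 (2 * PI - phi)) = Cmod (cint_r r a b 0 phi).
Proof.
  intros Hr. assert (Hk : 0 < Rpower 2 (- ell_of a b)) by apply exp_pos.
  assert (E := Rpower2_Cmod_cint_r_sqr r a b (2 * PI - phi) Hr).
  rewrite cos_minus, cos_2PI, sin_2PI, Rmult_1_l, Rmult_0_l, Rplus_0_r,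
    <- Rpower2_Cmod_cint_r_sqr, <- !Rsqr_pow2 in E by exact Hr.
  apply Rsqr_inj in E; try (apply Rmult_le_pos; [lra | apply Cmod_ge_0]).
  apply Rmult_eq_reg_l in E; lra.
Qed.

Lemma is_RInt_lorentz E c lo hi : 0 < E ->
  is_RInt (fun x => / (1 + E * (x - c) ^ 2)) lo hi
    ((atan (sqrt E * (hi - c)) - atan (sqrt E * (lo - c))) / sqrt E).
Proof.
  intros HE. assert (Hs : 0 < sqrt E) by (apply sqrt_lt_R0; exact HE).
  assert (Hden : forall x, 0 < 1 + E * (x - c) ^ 2) by (intros x; pose proof (pow2_ge_0 (x - c)); nra).
  eapply is_RInt_val_eq.
  - apply (is_RInt_derive (fun x => atan (sqrt E * (x - c)) / sqrt E)).
    + intros x _. auto_derive; [lra|].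
      replace (1 + sqrt E * (x + - c) * (sqrt E * (x + - c) * 1))
        with (1 + (sqrt E * sqrt E) * (x - c) ^ 2) by ring.
      rewrite sqrt_sqrt by lra. specialize (Hden x). field. lra.
    + intros x _. apply (ex_derive_continuous (fun x => / (1 + E * (x - c) ^ 2))).
      auto_derive. specialize (Hden x). simpl in Hden. lra.
  - simpl. unfold minus, plus, opp; simpl. field. lra.
Qed.

Lemma atan_sub_le_PI u v : atan u - atan v <= PI.
Proof. pose proof (atan_bound u); pose proof (atan_bound v); lra. Qed.

(* A Lorentzian bound on the half-period [0, PI] extends to the full period by the
   reflection symmetry [phi -> 2 PI - phi], then integrates to [c0 PI / sqrt E] twice. *)
Lemma Cmod_cpl_le_lorentz r a b c0 E psi : 0 < r -> 0 < E -> 0 <= c0 ->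
  (forall phi, 0 <= phi <= PI ->
     Rpower 2 (- ell_of a b) * Cmod (cint_r r a b 0 phi) <= c0 / (1 + E * (phi - psi) ^ 2)) ->
  Cmod (cpl a b) ^ 2 * E <= c0 ^ 2.
Proof.
  intros Hr HE Hc0 Hpt. assert (HPI := PI_RGT_0).
  assert (Hs : 0 < sqrt E) by (apply sqrt_lt_R0; exact HE).
  enough (H : Cmod (cpl a b) <= c0 / sqrt E).
  { replace (c0 ^ 2) with ((c0 / sqrt E) ^ 2 * E)
      by (unfold Rdiv; rewrite Rpow_mult_distr, pow_inv, pow2_sqrt by lra; field; lra).
    apply Rmult_le_compat_r; [lra|]. apply pow_incr. split; [apply Cmod_ge_0 | exact H]. }
  assert (Hpos : forall x, 0 < / (1 + E * x ^ 2))
    by (intros x; apply Rinv_0_lt_compat; pose proof (pow2_ge_0 x); nra).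
  set (lor := fun c x => / (1 + E * (x - c) ^ 2)).
  set (I c := (atan (sqrt E * (2 * PI - c)) - atan (sqrt E * (0 - c))) / sqrt E).
  assert (HI : forall c, I c <= PI / sqrt E)
    by (intros c; apply Rmult_le_compat_r; [apply Rlt_le, Rinv_0_lt_compat, Hs | apply atan_sub_le_PI]).
  eapply Rle_trans.
  - apply (Cmod_cpl_le_RInt r a b (fun x => c0 * (lor psi x + lor (2 * PI - psi) x))
                            (c0 * (I psi + I (2 * PI - psi))) Hr).
    + intros phi Hphi. unfold lor. destruct (Rle_lt_dec phi PI) as [Hle|Hgt].
      * specialize (Hpt phi (conj (proj1 Hphi) Hle)). specialize (Hpos (phi - (2 * PI - psi))).
        unfold Rdiv in Hpt. nra.
      * rewrite <- Cmod_cint_r_reflect by lra.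
        specialize (Hpt (2 * PI - phi) ltac:(lra)). specialize (Hpos (phi - psi)).
        replace ((2 * PI - phi - psi) ^ 2) with ((phi - (2 * PI - psi)) ^ 2) in Hpt by ring.
        unfold Rdiv in Hpt. nra.
    + apply (is_RInt_scal (V := R_NormedModule)).
      apply (is_RInt_plus (V := R_NormedModule)); apply is_RInt_lorentz, HE.
  - specialize (HI psi) as H1. specialize (HI (2 * PI - psi)) as H2.
    apply Rmult_le_reg_l with (2 * PI); [lra|].
    replace (2 * PI * (c0 * (I psi + I (2 * PI - psi)) / (2 * PI)))
      with (c0 * (I psi + I (2 * PI - psi))) by (field; lra).
    replace (2 * PI * (c0 / sqrt E)) with (c0 * (PI / sqrt E + PI / sqrt E)) by (field; lra).
    apply Rmult_le_compat_l; lra.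
Qed.

Lemma one_plus_le_exp_sub_sqr y : -1 <= y <= 3 / 2 -> 1 + y <= exp (y - y ^ 2 / 10).
Proof.
  intros Hy. set (z := y - y ^ 2 / 10).
  replace z with (z / 2 + z / 2) by field. rewrite exp_plus.
  assert (H1 := exp_ineq1_le (z / 2)).
  assert (Hz : 0 <= 1 + z / 2) by (unfold z; nra).
  assert (H2 : (1 + z / 2) * (1 + z / 2) <= exp (z / 2) * exp (z / 2))
    by (apply Rmult_le_compat; lra).
  enough (1 + y <= (1 + z / 2) * (1 + z / 2)) by lra.
  assert (0 <= y ^ 2 * ((1 - y / 10) ^ 2 / 4 - 1 / 10)) by (apply Rmult_le_pos; nra).
  unfold z. nra.
Qed.

Lemma pow_exp x n : exp x ^ n = exp (INR n * x).
Proof.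
  induction n as [|n IH]; [simpl; rewrite Rmult_0_l, exp_0; reflexivity|].
  rewrite S_INR, <- tech_pow_Rmult, IH, <- exp_plus. f_equal. ring.
Qed.

Lemma pow_mul_pow_le_exp n m y w : 0 <= 1 + y -> -1 <= w <= 3 / 2 ->
  (1 + y) ^ n * (1 + w) ^ m <= exp (INR n * y + INR m * (w - w ^ 2 / 10)).
Proof.
  intros Hy Hw. rewrite exp_plus, <- !pow_exp.
  apply Rmult_le_compat; try (apply pow_le; lra); apply pow_incr.
  - split; [exact Hy | apply exp_ineq1_le].
  - split; [lra | apply one_plus_le_exp_sub_sqr, Hw].
Qed.

(* The saddle points of [(1 + 1/z) ^ a (1 - z) ^ b] are the roots of [b z^2 + (b - a) z + a];
   when they are not real they lie on the circle [|z| = sqrt (a / b)], at [cos phi = saddle_cos a b]. *)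
Definition saddle_radius (a b : nat) : R := sqrt (INR a * INR b) / INR b.
Definition saddle_cos (a b : nat) : R := (INR a - INR b) / (2 * sqrt (INR a * INR b)).

Lemma saddle_radius_pos a b : (1 <= a)%nat -> (1 <= b)%nat -> 0 < saddle_radius a b.
Proof.
  intros Ha Hb.
  assert (1 <= INR a) by (apply (le_INR 1); exact Ha).
  assert (1 <= INR b) by (apply (le_INR 1); exact Hb).
  apply Rdiv_lt_0_compat; [apply sqrt_lt_R0|]; nra.
Qed.

Lemma saddle_factors_eq a b u : (1 <= a)%nat -> (1 <= b)%nat ->
  let q := sqrt (INR a * INR b) in let t := u - saddle_cos a b in
  (1 + 2 * u / saddle_radius a b + / saddle_radius a b ^ 2) / 2 = 1 + q / INR a * t /\
  (1 - 2 * saddle_radius a b * u + saddle_radius a b ^ 2) / 2 = 1 + - (q / INR b * t).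
Proof.
  intros Ha Hb q t. unfold t, saddle_radius, saddle_cos. fold q.
  assert (HA : 1 <= INR a) by (apply (le_INR 1); exact Ha).
  assert (HB : 1 <= INR b) by (apply (le_INR 1); exact Hb).
  assert (Hq : 0 < q) by (apply sqrt_lt_R0; nra).
  assert (Hq2 : q ^ 2 = INR a * INR b) by (apply pow2_sqrt; nra).
  split; field_simplify; try (rewrite Hq2; field); lra.
Qed.

Lemma Rabs_saddle_step_le A B q u : 0 < A <= B -> q ^ 2 = A * B -> 0 < q -> -1 <= u <= 1 ->
  Rabs (q / B * (u - (A - B) / (2 * q))) <= 3 / 2.
Proof.
  intros HAB Hq2 Hq Hu. assert (q <= B) by nra.
  replace (q / B * (u - (A - B) / (2 * q))) with (q / B * u + (B - A) / (2 * B)) by (field; lra).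
  eapply Rle_trans; [apply Rabs_triang|].
  rewrite Rabs_mult, (Rabs_right (q / B)), (Rabs_right ((B - A) / (2 * B))).
  - assert (Rabs u <= 1) by (apply Rabs_le; lra).
    assert (q / B <= 1) by (apply Rmult_le_reg_r with B; [lra|]; field_simplify; lra).
    assert ((B - A) / (2 * B) <= 1 / 2) by (apply Rmult_le_reg_r with (2 * B); [lra|]; field_simplify; lra).
    assert (0 <= q / B) by (apply Rlt_le, Rdiv_lt_0_compat; lra).
    nra.
  - apply Rle_ge, Rdiv_le_0_compat; lra.
  - apply Rle_ge, Rlt_le, Rdiv_lt_0_compat; lra.
Qed.

Lemma saddle_integrand_sqr_le a b phi : (1 <= a)%nat -> (1 <= b)%nat ->
  (Rpower 2 (- ell_of a b) * Cmod (cint_r (saddle_radius a b) a b 0 phi)) ^ 2 <=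
  exp (- Rmin (INR a) (INR b) * (cos phi - saddle_cos a b) ^ 2 / 10).
Proof.
  intros Ha Hb. assert (Hr := saddle_radius_pos a b Ha Hb).
  assert (HU := pow2_ge_0 (Cmod (Cplus 1 (Cmult (RtoC (/ saddle_radius a b)) (emiphi phi))))).
  assert (HW := pow2_ge_0 (Cmod (Cminus 1 (Cmult (RtoC (saddle_radius a b)) (eiphi phi))))).
  rewrite Cmod_1_plus_emiphi_sqr in HU by lra. rewrite Cmod_1_minus_eiphi_sqr in HW.
  rewrite Rpower2_Cmod_cint_r_sqr by lra.
  destruct (saddle_factors_eq a b (cos phi) Ha Hb) as [EX EY]. rewrite EX, EY.
  assert (HX : 0 <= 1 + sqrt (INR a * INR b) / INR a * (cos phi - saddle_cos a b))
    by (rewrite <- EX; lra).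
  assert (HY : 0 <= 1 + - (sqrt (INR a * INR b) / INR b * (cos phi - saddle_cos a b)))
    by (rewrite <- EY; lra).
  clear EX EY HU HW. assert (Hu := COS_bound phi). unfold saddle_cos in *.
  assert (HA : 1 <= INR a) by (apply (le_INR 1); exact Ha).
  assert (HB : 1 <= INR b) by (apply (le_INR 1); exact Hb).
  set (A := INR a) in *. set (B := INR b) in *. set (q := sqrt (A * B)) in *.
  assert (Hq : 0 < q) by (apply sqrt_lt_R0; nra).
  assert (Hq2 : q ^ 2 = A * B) by (apply pow2_sqrt; nra).
  set (t := cos phi - (A - B) / (2 * q)) in *.
  (* In the two exponents of [pow_mul_pow_le_exp] the linear terms [q t] cancel. *)
  destruct (Rle_dec A B) as [HAB|HAB].
  - rewrite Rmin_left by exact HAB.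
    replace (- A * t ^ 2 / 10) with (A * (q / A * t) + B * (- (q / B * t) - (- (q / B * t)) ^ 2 / 10))
      by (field_simplify; [rewrite Hq2; field|..]; lra).
    apply pow_mul_pow_le_exp; [exact HX|]. split; [lra|].
    assert (L := Rabs_saddle_step_le A B q (cos phi) ltac:(lra) Hq2 Hq Hu).
    apply Rabs_le_between in L. fold t in L. lra.
  - rewrite Rmin_right by lra.
    replace (- B * t ^ 2 / 10) with (B * (- (q / B * t)) + A * (q / A * t - (q / A * t) ^ 2 / 10))
      by (field_simplify; [rewrite Hq2; field|..]; lra).
    rewrite Rmult_comm. apply pow_mul_pow_le_exp; [exact HY|]. split; [lra|].
    assert (L := Rabs_saddle_step_le B A q (- cos phi) ltac:(lra) ltac:(lra) Hq ltac:(lra)).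
    replace (q / A * (- cos phi - (B - A) / (2 * q))) with (- (q / A * t)) in L
      by (unfold t; field; lra).
    rewrite Rabs_Ropp in L. apply Rabs_le_between in L. lra.
Qed.

Lemma exp_opp_le_inv_1_plus w : 0 <= w -> exp (- w) <= / (1 + w).
Proof.
  intros Hw. rewrite exp_Ropp. apply Rinv_le_contravar; [lra | apply exp_ineq1_le].
Qed.

Lemma saddle_integrand_le a b phi : (1 <= a)%nat -> (1 <= b)%nat ->
  Rpower 2 (- ell_of a b) * Cmod (cint_r (saddle_radius a b) a b 0 phi) <=
  / (1 + Rmin (INR a) (INR b) / 20 * (cos phi - saddle_cos a b) ^ 2).
Proof.
  intros Ha Hb.
  assert (Hm : 0 <= Rmin (INR a) (INR b) / 20)
    by (assert (0 <= Rmin (INR a) (INR b)) by (apply Rmin_glb; apply pos_INR); lra).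
  set (w := Rmin (INR a) (INR b) / 20 * (cos phi - saddle_cos a b) ^ 2).
  assert (Hw : 0 <= w) by (apply Rmult_le_pos; [exact Hm | apply pow2_ge_0]).
  eapply Rle_trans; [|apply exp_opp_le_inv_1_plus, Hw].
  apply Rsqr_incr_0_var; [|apply Rlt_le, exp_pos].
  rewrite !Rsqr_pow2, pow_exp.
  replace (INR 2 * - w) with (- Rmin (INR a) (INR b) * (cos phi - saddle_cos a b) ^ 2 / 10)
    by (unfold w; simpl; field).
  apply saddle_integrand_sqr_le; assumption.
Qed.

Lemma sin_ge_third y : 0 <= y <= PI / 2 -> y / 3 <= sin y.
Proof.
  intros Hy. assert (HPI := PI_4). assert (HP := PI_RGT_0).
  destruct (SIN y) as [H _]; try lra.
  eapply Rle_trans; [|exact H].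
  replace (sin_lb y) with (y - y ^ 3 / 6 + y ^ 5 / 120 - y ^ 7 / 5040)
    by (unfold sin_lb, sin_approx, sin_term; simpl; field).
  assert (Hy2 : y ^ 2 <= 4) by nra.
  assert (0 <= y * (2 / 3 - y ^ 2 / 6)) by (apply Rmult_le_pos; lra).
  assert (0 <= y ^ 5 * (1 / 120 - y ^ 2 / 5040)) by (apply Rmult_le_pos; [apply pow_le|]; lra).
  nra.
Qed.

Lemma sin_le_sin_between c th : 0 <= c <= PI / 2 -> c <= th <= PI - c -> sin c <= sin th.
Proof.
  intros Hc Hth. destruct (Rle_dec th (PI / 2)).
  - apply sin_incr_1; lra.
  - rewrite <- (sin_PI_x th). apply sin_incr_1; lra.
Qed.

Lemma Rabs_sin_half_ge y : Rabs y <= PI -> Rabs y / 6 <= Rabs (sin (y / 2)).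
Proof.
  intros Hy. assert (HP := PI_RGT_0).
  destruct (Rle_dec 0 y).
  - rewrite Rabs_right in * by lra.
    pose proof (sin_ge_third (y / 2)). rewrite Rabs_right; [lra|].
    apply Rle_ge, sin_ge_0; lra.
  - rewrite Rabs_left in * by lra.
    pose proof (sin_ge_third (- y / 2)). replace (y / 2) with (- (- y / 2)) by field.
    rewrite sin_neg, Rabs_Ropp, Rabs_right; [lra|].
    apply Rle_ge, sin_ge_0; lra.
Qed.

Lemma sqr_ge_of_half_angle (t w s d : R) :
  t = 2 * w ^ 2 + d -> 0 <= d -> Rabs s / 6 <= Rabs w ->
  s ^ 4 / 324 <= t ^ 2 /\ d / 18 * s ^ 2 <= t ^ 2.
Proof.
  intros Ht Hd Hw. assert (0 <= Rabs s) by apply Rabs_pos.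
  assert (H1 : (Rabs s / 6) ^ 2 <= w ^ 2) by (rewrite <- (pow2_abs w); apply pow_incr; lra).
  replace ((Rabs s / 6) ^ 2) with (Rabs s ^ 2 / 36) in H1 by field. rewrite pow2_abs in H1.
  assert (0 <= s ^ 2) by apply pow2_ge_0.
  assert (Ht0 : s ^ 2 / 18 <= t) by lra.
  split.
  - replace (s ^ 4) with ((s ^ 2) ^ 2) by ring.
    assert ((s ^ 2 / 18) ^ 2 <= t ^ 2) by (apply pow_incr; lra). lra.
  - assert (d * (s ^ 2 / 18) <= t * t) by (apply Rmult_le_compat; lra). simpl. lra.
Qed.

Lemma cos_sub_sqr_ge_outside x phi : 1 <= x -> 0 <= phi <= PI ->
  phi ^ 4 / 324 <= (cos phi - x) ^ 2 /\ (x - 1) / 18 * phi ^ 2 <= (cos phi - x) ^ 2.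
Proof.
  intros Hx Hphi. replace ((cos phi - x) ^ 2) with ((x - cos phi) ^ 2) by ring.
  apply (sqr_ge_of_half_angle _ (sin (phi / 2))); [|lra|].
  - replace phi with (2 * (phi / 2)) at 1 by field. rewrite cos_2a_sin. unfold Rsqr. ring.
  - apply Rabs_sin_half_ge, Rabs_le. lra.
Qed.

Lemma sin_half_sum_ge phi psi : 0 <= phi <= PI -> 0 <= psi <= PI ->
  Rabs (phi - psi) / 6 <= sin ((phi + psi) / 2) /\ sin psi / 2 <= sin ((phi + psi) / 2).
Proof.
  intros Hphi Hpsi. assert (HP := PI_RGT_0). split.
  - set (s := Rabs (phi - psi)).
    assert (Hs : 0 <= s <= PI) by (split; [apply Rabs_pos | apply Rabs_le; lra]).
    assert (Hs' : s / 2 <= (phi + psi) / 2 <= PI - s / 2)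
      by (unfold s; destruct (Rle_dec 0 (phi - psi));
          [rewrite Rabs_right | rewrite Rabs_left]; lra).
    pose proof (sin_ge_third (s / 2) ltac:(lra)).
    pose proof (sin_le_sin_between (s / 2) ((phi + psi) / 2) ltac:(lra) Hs'). lra.
  - assert (Hsp : sin psi = 2 * sin (psi / 2) * cos (psi / 2))
      by (rewrite <- sin_2a; f_equal; field).
    assert (0 <= sin (psi / 2)) by (apply sin_ge_0; lra).
    assert (sin (psi / 2) <= 1) by apply SIN_bound.
    assert (0 <= cos (psi / 2)) by (apply cos_ge_0; lra).
    assert (cos (psi / 2) <= 1) by apply COS_bound.
    destruct (Rle_dec psi (PI / 2)).
    + pose proof (sin_le_sin_between (psi / 2) ((phi + psi) / 2) ltac:(lra) ltac:(lra)). nra.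
    + pose proof (sin_le_sin_between ((PI - psi) / 2) ((phi + psi) / 2) ltac:(lra) ltac:(lra)).
      replace ((PI - psi) / 2) with (PI / 2 - psi / 2) in * by field.
      rewrite sin_shift in *. nra.
Qed.

(* [cos phi - cos psi = -2 sin ((phi - psi) / 2) sin ((phi + psi) / 2)], and both factors are
   bounded below by [|phi - psi| / 6]; the second also by [sin psi / 2]. *)
Lemma cos_sub_sqr_ge_inside x phi : -1 <= x <= 1 -> 0 <= phi <= PI ->
  (phi - acos x) ^ 4 / 324 <= (cos phi - x) ^ 2 /\
  (1 - x ^ 2) / 36 * (phi - acos x) ^ 2 <= (cos phi - x) ^ 2.
Proof.
  intros Hx Hphi. assert (Hpsi := acos_bound x). set (psi := acos x) in *.
  assert (Hc : cos psi = x) by (apply cos_acos; lra).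
  assert (Hs : sin psi ^ 2 = 1 - x ^ 2)
    by (assert (0 <= 1 - x²) by (unfold Rsqr; nra);
        unfold psi; rewrite sin_acos, pow2_sqrt by lra; unfold Rsqr; ring).
  assert (Hsin0 : 0 <= sin psi) by (apply sin_ge_0; lra).
  rewrite <- Hs, <- Hc, form2.
  assert (Hu := Rabs_sin_half_ge (phi - psi) ltac:(apply Rabs_le; lra)).
  destruct (sin_half_sum_ge phi psi Hphi Hpsi) as [Hv1 Hv2].
  set (s := Rabs (phi - psi)) in *. assert (0 <= s) by apply Rabs_pos.
  replace ((phi - psi) ^ 4) with ((s ^ 2) ^ 2) by (unfold s; rewrite pow2_abs; ring).
  replace ((phi - psi) ^ 2) with (s ^ 2) by (unfold s; apply pow2_abs).
  set (u := sin ((phi - psi) / 2)) in *. set (v := sin ((phi + psi) / 2)) in *.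
  assert (Hu2 : (s / 6) ^ 2 <= u ^ 2) by (rewrite <- (pow2_abs u); apply pow_incr; lra).
  assert (Hv2' : (s / 6) ^ 2 <= v ^ 2) by (apply pow_incr; lra).
  assert (Hv3 : (sin psi / 2) ^ 2 <= v ^ 2) by (apply pow_incr; lra).
  assert (0 <= u ^ 2) by apply pow2_ge_0.
  replace ((-2 * u * v) ^ 2) with (4 * u ^ 2 * v ^ 2) by ring.
  split; nra.
Qed.

Lemma cos_sub_sqr_lower_bounds x : Rabs x <= 4 / 3 -> exists psi E0,
  Rabs (1 - x ^ 2) / 42 <= E0 /\
  forall phi, 0 <= phi <= PI ->
    (phi - psi) ^ 4 / 324 <= (cos phi - x) ^ 2 /\ E0 * (phi - psi) ^ 2 <= (cos phi - x) ^ 2.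
Proof.
  intros Hx. apply Rabs_le_between in Hx. assert (HP := PI_RGT_0).
  destruct (Rle_dec x 1) as [Hx1|Hx1]; [destruct (Rle_dec (-1) x) as [Hx2|Hx2]|].
  - exists (acos x), ((1 - x ^ 2) / 36). split.
    + assert (0 <= (1 - x) * (1 + x)) by (apply Rmult_le_pos; lra).
      rewrite Rabs_right by nra. lra.
    + intros phi Hphi. apply cos_sub_sqr_ge_inside; lra.
  - exists PI, ((- 1 - x) / 18). split.
    + rewrite Rabs_left1 by nra. nra.
    + intros phi Hphi.
      destruct (cos_sub_sqr_ge_outside (- x) (PI - phi) ltac:(lra) ltac:(lra)) as [H1 H2].
      rewrite Rtrigo_facts.cos_pi_minus in H1, H2.
      replace ((phi - PI) ^ 4) with ((PI - phi) ^ 4) by ring.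
      replace ((phi - PI) ^ 2) with ((PI - phi) ^ 2) by ring.
      replace ((cos phi - x) ^ 2) with ((- cos phi - - x) ^ 2) by ring.
      split; lra.
  - exists 0, ((x - 1) / 18). split.
    + rewrite Rabs_left1 by nra. nra.
    + intros phi Hphi. rewrite Rminus_0_r. apply cos_sub_sqr_ge_outside; lra.
Qed.

Lemma Cmod_cpl_sqr_le_radius r a b : 0 < r ->
  Cmod (cpl a b) ^ 2 <= ((1 + / r) ^ 2 / 2) ^ a * ((1 + r) ^ 2 / 2) ^ b.
Proof.
  intros Hr. assert (HPI := PI_RGT_0).
  assert (Hi : 0 < / r) by (apply Rinv_0_lt_compat, Hr).
  set (K2 := ((1 + / r) ^ 2 / 2) ^ a * ((1 + r) ^ 2 / 2) ^ b).
  assert (HK2 : 0 <= K2) by (apply Rmult_le_pos; apply pow_le; nra).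
  assert (HK : 0 <= sqrt K2) by apply sqrt_pos.
  rewrite <- (pow2_sqrt K2) by exact HK2. apply pow_incr. split; [apply Cmod_ge_0|].
  replace (sqrt K2) with ((2 * PI - 0) * sqrt K2 / (2 * PI)) by (field; lra).
  apply (Cmod_cpl_le_RInt r a b (fun _ => sqrt K2)); [exact Hr| |apply (is_RInt_const (V := R_NormedModule))].
  intros phi _. apply Rsqr_incr_0_var; [|exact HK].
  rewrite !Rsqr_pow2, pow2_sqrt, Rpower2_Cmod_cint_r_sqr by lra.
  assert (Hc := COS_bound phi).
  replace (1 + 2 * cos phi / r + / r ^ 2) with (1 + 2 * cos phi * / r + (/ r) ^ 2)
    by (rewrite pow_inv; unfold Rdiv; ring).
  set (s := / r) in *. set (c := cos phi) in *.
  assert (0 <= (1 + c) * s) by (apply Rmult_le_pos; lra).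
  assert (0 <= (1 - c) * s) by (apply Rmult_le_pos; lra).
  assert (0 <= (1 + c) * r) by (apply Rmult_le_pos; lra).
  assert (0 <= (1 - c) * r) by (apply Rmult_le_pos; lra).
  pose proof (pow2_ge_0 (1 - s)). pose proof (pow2_ge_0 (1 - r)).
  apply Rmult_le_compat; try apply pow_le; try apply pow_incr; repeat split; nra.
Qed.

Lemma bernoulli_le h n : 0 <= h -> 1 + INR n * h <= (1 + h) ^ n.
Proof.
  intros Hh. induction n as [|n IH]; [simpl; lra|].
  rewrite S_INR, <- tech_pow_Rmult. pose proof (pos_INR n). nra.
Qed.

Lemma pow_two_thirds_mul_le n : (2 / 3) ^ n * (1 + INR n) <= 2.
Proof.
  assert (H := bernoulli_le (1 / 2) n ltac:(lra)).
  assert (E : (2 / 3) ^ n * (1 + 1 / 2) ^ n = 1)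
    by (rewrite <- Rpow_mult_distr; replace (2 / 3 * (1 + 1 / 2)) with 1 by field; apply pow1).
  assert (0 <= (2 / 3) ^ n) by (apply pow_le; lra).
  pose proof (pos_INR n). nra.
Qed.

(* [50 = (1 + 9) ^ 2 / 2] and [50 / 81 = (1 + 1/9) ^ 2 / 2], and [50 (50/81) ^ 9 < 2/3]. *)
Lemma unbalanced_weight_le a c :
  50 ^ a * (50 / 81) ^ (9 * a + c) * (1 + INR a + INR (9 * a + c)) <= 20.
Proof.
  rewrite plus_INR, mult_INR, pow_add, pow_mult. replace (INR 9) with 9 by (simpl; ring).
  assert (H1 : 0 <= 50 * (50 / 81) ^ 9 <= 2 / 3) by (simpl; lra).
  assert (Ha : 50 ^ a * ((50 / 81) ^ 9) ^ a <= (2 / 3) ^ a)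
    by (rewrite <- Rpow_mult_distr; apply pow_incr; exact H1).
  assert (Hc : (50 / 81) ^ c <= (2 / 3) ^ c) by (apply pow_incr; lra).
  assert (G := pow_two_thirds_mul_le (a + c)). rewrite pow_add, plus_INR in G.
  assert (0 <= (50 / 81) ^ c) by (apply pow_le; lra).
  assert (0 <= 50 ^ a * ((50 / 81) ^ 9) ^ a) by (apply Rmult_le_pos; apply pow_le; lra).
  assert (0 <= (2 / 3) ^ a) by (apply pow_le; lra).
  assert (0 <= (2 / 3) ^ c) by (apply pow_le; lra).
  pose proof (pos_INR a). pose proof (pos_INR c).
  assert (X : 50 ^ a * ((50 / 81) ^ 9) ^ a * (50 / 81) ^ c <= (2 / 3) ^ a * (2 / 3) ^ c)
    by (apply Rmult_le_compat; assumption).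
  set (L := 1 + INR a + (9 * INR a + INR c)).
  assert (Y : 0 <= L <= 10 * (1 + (INR a + INR c))) by (unfold L; lra).
  replace (50 ^ a * (((50 / 81) ^ 9) ^ a * (50 / 81) ^ c) * L)
    with (50 ^ a * ((50 / 81) ^ 9) ^ a * (50 / 81) ^ c * L) by ring.
  apply Rle_trans with ((2 / 3) ^ a * (2 / 3) ^ c * L); [apply Rmult_le_compat_r; lra|].
  apply Rle_trans with ((2 / 3) ^ a * (2 / 3) ^ c * (10 * (1 + (INR a + INR c)))).
  - apply Rmult_le_compat_l; [apply Rmult_le_pos|]; lra.
  - lra.
Qed.

Lemma Cmod_cpl_unbalanced a b : (9 * a <= b)%nat \/ (9 * b <= a)%nat ->
  Cmod (cpl a b) ^ 2 * (1 + INR a + INR b) <= 20.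
Proof.
  pose proof (pos_INR a). pose proof (pos_INR b).
  intros [Hab|Hba].
  - eapply Rle_trans; [|apply (unbalanced_weight_le a (b - 9 * a))].
    replace (9 * a + (b - 9 * a))%nat with b by lia.
    apply Rmult_le_compat_r; [lra|].
    eapply Rle_trans; [apply (Cmod_cpl_sqr_le_radius (/ 9)); lra|].
    rewrite Rinv_inv. right. f_equal; f_equal; field.
  - eapply Rle_trans; [|apply (unbalanced_weight_le b (a - 9 * b))].
    replace (9 * b + (a - 9 * b))%nat with a by lia.
    replace (1 + INR b + INR a) with (1 + INR a + INR b) by ring.
    apply Rmult_le_compat_r; [lra|].
    eapply Rle_trans; [apply (Cmod_cpl_sqr_le_radius 9); lra|].
    rewrite Rmult_comm. right. f_equal; f_equal; field.
Qed.

Lemma inv_1_plus_sqr_le y : 0 <= y -> / (1 + y ^ 2) <= 2 / (1 + y).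
Proof.
  intros Hy. apply Rmult_le_reg_l with ((1 + y ^ 2) * (1 + y)); [nra|].
  field_simplify; nra.
Qed.

Lemma dist_le_ell a b : Rabs (Rabs (p_of a b) - ell_of a b / sqrt 2) <= ell_of a b.
Proof.
  unfold p_of, ell_of. pose proof (pos_INR a). pose proof (pos_INR b).
  set (l := (INR a + INR b) / 2).
  assert (Hp : Rabs ((INR b - INR a) / 2) <= l) by (unfold l; apply Rabs_le; lra).
  assert (Hp0 := Rabs_pos ((INR b - INR a) / 2)).
  assert (Hs1 : 1 <= sqrt 2) by (rewrite <- sqrt_1; apply sqrt_le_1_alt; lra).
  assert (0 <= l / sqrt 2 <= l).
  { split; [apply Rdiv_le_0_compat; unfold l; lra|].
    apply Rmult_le_reg_r with (sqrt 2); [lra|]. field_simplify; unfold l; nra. }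
  apply Rabs_le. lra.
Qed.

(* [1 - saddle_cos ^ 2 = (l ^ 2 - 2 p ^ 2) / (a b)], where
   [l ^ 2 - 2 p ^ 2 = sqrt 2 (l / sqrt 2 - |p|) (l + sqrt 2 |p|)] and [a b <= l ^ 2]. *)
Lemma dist_le_ell_mul a b : (1 <= a)%nat -> (1 <= b)%nat ->
  Rabs (Rabs (p_of a b) - ell_of a b / sqrt 2) <= ell_of a b * Rabs (1 - saddle_cos a b ^ 2).
Proof.
  intros Ha Hb. unfold saddle_cos, ell_of, p_of.
  assert (HA : 1 <= INR a) by (apply (le_INR 1); exact Ha).
  assert (HB : 1 <= INR b) by (apply (le_INR 1); exact Hb).
  set (A := INR a) in *. set (B := INR b) in *. set (q := sqrt (A * B)).
  set (l := (A + B) / 2). set (p := (B - A) / 2).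
  assert (Hq : 0 < q) by (apply sqrt_lt_R0; nra).
  assert (Hq2 : q ^ 2 = A * B) by (apply pow2_sqrt; nra).
  set (s2 := sqrt 2). assert (Hs2 : s2 ^ 2 = 2) by (apply pow2_sqrt; lra).
  assert (Hs1 : 1 <= s2) by (rewrite <- sqrt_1; apply sqrt_le_1_alt; lra).
  set (P := Rabs p). assert (HP : 0 <= P) by apply Rabs_pos.
  assert (HP2 : P ^ 2 = p ^ 2) by apply pow2_abs.
  set (d := Rabs (P - l / s2)). assert (Hd : 0 <= d) by apply Rabs_pos.
  assert (Hl : 1 <= l) by (unfold l; lra).
  assert (E1 : 1 - ((A - B) / (2 * q)) ^ 2 = (l ^ 2 - 2 * P ^ 2) / (A * B)).
  { rewrite HP2. unfold l, p. field_simplify; [|nra|lra]. rewrite Hq2. field. nra. }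
  assert (E2 : Rabs (l ^ 2 - 2 * P ^ 2) = s2 * d * (l + s2 * P)).
  { replace (l ^ 2 - 2 * P ^ 2) with (- (s2 * (P - l / s2)) * (l + s2 * P))
      by (field_simplify; [rewrite Hs2; field|]; lra).
    rewrite Rabs_mult, Rabs_Ropp, Rabs_mult, (Rabs_right s2), (Rabs_right (l + s2 * P)) by nra.
    reflexivity. }
  assert (HABl : A * B <= l ^ 2) by (unfold l; pose proof (pow2_ge_0 (A - B)); nra).
  rewrite E1, Rabs_div, (Rabs_right (A * B)), E2 by nra.
  apply Rle_trans with (l * (s2 * d * (l + s2 * P) / l ^ 2)).
  - apply Rmult_le_reg_l with (l ^ 2); [nra|]. field_simplify; [|lra].
    assert (0 <= l * d * (s2 - 1)) by (repeat apply Rmult_le_pos; lra).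
    assert (0 <= d * s2 ^ 2 * P) by (repeat apply Rmult_le_pos; try apply pow_le; lra). nra.
  - apply Rmult_le_compat_l; [lra|]. unfold Rdiv. apply Rmult_le_compat_l.
    + assert (0 <= s2 * P) by (apply Rmult_le_pos; lra). repeat apply Rmult_le_pos; lra.
    + apply Rinv_le_contravar; nra.
Qed.

Lemma INR_le_9_mul m n : (m <= 9 * n)%nat -> INR m <= 9 * INR n.
Proof. intros H. replace 9 with (INR 9) by (simpl; ring). rewrite <- mult_INR. apply le_INR, H. Qed.

Section Balanced.

Variables a b : nat.
Hypothesis Ha : (1 <= a)%nat.
Hypothesis Hb : (1 <= b)%nat.
Hypothesis Hab : (b <= 9 * a)%nat.
Hypothesis Hba : (a <= 9 * b)%nat.

Let Am := Rmin (INR a) (INR b) / 20.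

Lemma Am_ge : 1 / 20 <= Am.
Proof.
  assert (1 <= INR a) by (apply (le_INR 1); exact Ha).
  assert (1 <= INR b) by (apply (le_INR 1); exact Hb).
  assert (1 <= Rmin (INR a) (INR b)) by (apply Rmin_glb; assumption).
  unfold Am. lra.
Qed.

Lemma Rabs_saddle_cos_le : Rabs (saddle_cos a b) <= 4 / 3.
Proof.
  unfold saddle_cos.
  assert (HA : 1 <= INR a) by (apply (le_INR 1); exact Ha).
  assert (HB : 1 <= INR b) by (apply (le_INR 1); exact Hb).
  assert (H9a := INR_le_9_mul _ _ Hab). assert (H9b := INR_le_9_mul _ _ Hba).
  set (A := INR a) in *. set (B := INR b) in *. set (q := sqrt (A * B)).
  assert (Hq : 0 < q) by (apply sqrt_lt_R0; nra).
  assert (Hq2 : q * q = A * B) by (apply sqrt_sqrt; nra).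
  rewrite Rabs_div, (Rabs_right (2 * q)) by lra.
  apply Rmult_le_reg_l with (2 * q); [lra|]. field_simplify; [|lra].
  apply Rsqr_incr_0_var; [|lra]. rewrite <- Rsqr_abs. unfold Rsqr.
  assert (0 <= (9 * A - B) * (9 * B - A)) by (apply Rmult_le_pos; lra).
  nra.
Qed.

Lemma balanced_quartic : Cmod (cpl a b) ^ 4 * Am <= 5184.
Proof.
  assert (HAm := Am_ge).
  destruct (cos_sub_sqr_lower_bounds _ Rabs_saddle_cos_le) as [psi [E0 [_ Hgeo]]].
  set (E := sqrt Am / 18).
  assert (HE : 0 < E) by (apply Rdiv_lt_0_compat; [apply sqrt_lt_R0|]; lra).
  assert (HE2 : E ^ 2 = Am / 324) by (unfold E; unfold Rdiv; rewrite Rpow_mult_distr, pow2_sqrt by lra; field).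
  assert (Hr := saddle_radius_pos a b Ha Hb).
  assert (H : Cmod (cpl a b) ^ 2 * E <= 2 ^ 2).
  { apply (Cmod_cpl_le_lorentz _ a b 2 E psi Hr HE ltac:(lra)).
    intros phi Hphi. eapply Rle_trans; [apply saddle_integrand_le; assumption|].
    fold Am. destruct (Hgeo phi Hphi) as [Hq _].
    assert (Hy : 0 <= E * (phi - psi) ^ 2) by (apply Rmult_le_pos; [lra | apply pow2_ge_0]).
    eapply Rle_trans; [|apply inv_1_plus_sqr_le, Hy].
    apply Rinv_le_contravar; [pose proof (pow2_ge_0 (E * (phi - psi) ^ 2)); lra|].
    apply Rplus_le_compat_l.
    replace ((E * (phi - psi) ^ 2) ^ 2) with (Am * ((phi - psi) ^ 4 / 324))
      by (rewrite Rpow_mult_distr, HE2; field).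
    apply Rmult_le_compat_l; lra. }
  pose proof (Cmod_ge_0 (cpl a b)).
  assert (H2 : (Cmod (cpl a b) ^ 2 * E) ^ 2 <= (2 ^ 2) ^ 2)
    by (apply pow_incr; split; [apply Rmult_le_pos; [apply pow2_ge_0|lra] | exact H]).
  rewrite Rpow_mult_distr, HE2, <- pow_mult in H2. simpl in H2 |- *. lra.
Qed.

Lemma balanced_quadratic :
  Cmod (cpl a b) ^ 2 * (Am * (Rabs (1 - saddle_cos a b ^ 2) / 42)) <= 1.
Proof.
  assert (HAm := Am_ge).
  destruct (cos_sub_sqr_lower_bounds _ Rabs_saddle_cos_le) as [psi [E0 [HE0 Hgeo]]].
  assert (HC := pow2_ge_0 (Cmod (cpl a b))). assert (Habs := Rabs_pos (1 - saddle_cos a b ^ 2)).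
  apply Rle_trans with (Cmod (cpl a b) ^ 2 * (Am * E0)); [apply Rmult_le_compat_l, Rmult_le_compat_l; lra|].
  destruct (Req_dec E0 0) as [->|HE0'].
  - rewrite Rmult_0_r, Rmult_0_r. lra.
  - assert (HE : 0 < Am * E0) by (apply Rmult_lt_0_compat; lra).
    assert (Hr := saddle_radius_pos a b Ha Hb).
    replace 1 with (1 ^ 2) by ring.
    apply (Cmod_cpl_le_lorentz _ a b 1 (Am * E0) psi Hr HE ltac:(lra)).
    intros phi Hphi. eapply Rle_trans; [apply saddle_integrand_le; assumption|].
    fold Am. destruct (Hgeo phi Hphi) as [_ Hq].
    unfold Rdiv. rewrite Rmult_1_l. apply Rinv_le_contravar.
    + pose proof (pow2_ge_0 (phi - psi)). nra.
    + rewrite Rmult_assoc. apply Rplus_le_compat_l, Rmult_le_compat_l; lra.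
Qed.

Lemma ell_le_100_Am : ell_of a b <= 100 * Am.
Proof.
  assert (H9a := INR_le_9_mul _ _ Hab). assert (H9b := INR_le_9_mul _ _ Hba).
  unfold ell_of, Am, Rmin. destruct (Rle_dec (INR a) (INR b)); lra.
Qed.

End Balanced.

Lemma unbalanced_or_balanced a b :
  ((9 * a <= b) \/ (9 * b <= a))%nat \/ ((1 <= a) /\ (1 <= b) /\ (b <= 9 * a) /\ (a <= 9 * b))%nat.
Proof. lia. Qed.

Lemma ell_of_nonneg a b : 0 <= ell_of a b.
Proof. unfold ell_of. pose proof (pos_INR a). pose proof (pos_INR b). lra. Qed.

Lemma Cmod_cpl_pow4_le a b : Cmod (cpl a b) ^ 4 * (1 + ell_of a b) <= 100 ^ 4.
Proof.
  assert (Hx := pow2_ge_0 (Cmod (cpl a b))). assert (Hl := ell_of_nonneg a b).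
  replace (Cmod (cpl a b) ^ 4) with ((Cmod (cpl a b) ^ 2) ^ 2) by ring.
  destruct (unbalanced_or_balanced a b) as [Hu|(Ha & Hb & Hab & Hba)].
  - assert (H := Cmod_cpl_unbalanced a b Hu).
    assert (1 + ell_of a b <= 1 + INR a + INR b)
      by (unfold ell_of; pose proof (pos_INR a); pose proof (pos_INR b); lra).
    assert (Cmod (cpl a b) ^ 2 * (1 + ell_of a b) <= 20) by nra.
    assert (Cmod (cpl a b) ^ 2 <= 20) by nra.
    simpl in *. nra.
  - assert (H := balanced_quartic a b Ha Hb Hab Hba).
    assert (HlA := ell_le_100_Am a b Hab Hba).
    assert (1 <= ell_of a b)
      by (unfold ell_of; apply (le_INR 1) in Ha; apply (le_INR 1) in Hb; simpl in *; lra).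
    simpl in *. nra.
Qed.

Lemma Cmod_cpl_sqr_dist_le a b :
  Cmod (cpl a b) ^ 2 * Rabs (Rabs (p_of a b) - ell_of a b / sqrt 2) <= 100 ^ 2.
Proof.
  assert (Hx := pow2_ge_0 (Cmod (cpl a b))). assert (Hl := ell_of_nonneg a b).
  destruct (unbalanced_or_balanced a b) as [Hu|(Ha & Hb & Hab & Hba)].
  - assert (H := Cmod_cpl_unbalanced a b Hu).
    assert (Hd := dist_le_ell a b).
    assert (ell_of a b <= 1 + INR a + INR b)
      by (unfold ell_of; pose proof (pos_INR a); pose proof (pos_INR b); lra).
    simpl in *. nra.
  - assert (H := balanced_quadratic a b Ha Hb Hab Hba).
    assert (HlA := ell_le_100_Am a b Hab Hba).
    assert (Hd := dist_le_ell_mul a b Ha Hb).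
    assert (Habs := Rabs_pos (1 - saddle_cos a b ^ 2)).
    set (X := Cmod (cpl a b) ^ 2) in *. set (U := Rabs (1 - saddle_cos a b ^ 2)) in *.
    assert (X * (ell_of a b * U) <= X * (100 * (Rmin (INR a) (INR b) / 20) * U))
      by (apply Rmult_le_compat_l, Rmult_le_compat_r; assumption).
    assert (X * Rabs (Rabs (p_of a b) - ell_of a b / sqrt 2) <= X * (ell_of a b * U))
      by (apply Rmult_le_compat_l; assumption).
    lra.
Qed.

Lemma pow_le_pow_inv x y n : 0 <= x -> 0 <= y -> x ^ S n <= y ^ S n -> x <= y.
Proof.
  intros Hx Hy H. destruct (Rle_lt_dec x y) as [|Hlt]; [assumption|]. exfalso.
  enough (y ^ S n < x ^ S n) by lra.
  induction n as [|n IH]; [simpl; lra|].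
  rewrite <- (tech_pow_Rmult y), <- (tech_pow_Rmult x).
  assert (y ^ S n <= x ^ S n) by (apply pow_incr; lra).
  assert (0 < x ^ S n) by (apply pow_lt; lra).
  nra.
Qed.

Lemma le_mul_Rpower_opp_inv n x y K : 0 <= x -> 0 < y -> 0 < K ->
  x ^ S n * y <= K ^ S n -> x <= K * Rpower y (- / INR (S n)).
Proof.
  intros Hx Hy HK H. assert (Hn : 0 < INR (S n)) by apply lt_0_INR, Nat.lt_0_succ.
  set (s := Rpower y (/ INR (S n))). assert (Hs : 0 < s) by apply exp_pos.
  assert (Hsn : s ^ S n = y).
  { unfold s. rewrite <- Rpower_pow, Rpower_mult by apply exp_pos.
    rewrite Rinv_l, Rpower_1 by lra. reflexivity. }
  rewrite Rpower_Ropp. fold s.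
  apply Rmult_le_reg_r with s; [exact Hs|].
  replace (K * / s * s) with K by (field; lra).
  apply (pow_le_pow_inv _ _ n); [apply Rmult_le_pos; lra | lra |].
  rewrite Rpow_mult_distr, Hsn. exact H.
Qed.

Theorem propositionA5 :
  exists K : R, forall a b : nat,
    Cmod (cpl a b) <= K * minbound (ell_of a b) (p_of a b).
Proof.
  exists 100. intros a b.
  assert (H4 := Cmod_cpl_pow4_le a b). assert (H2 := Cmod_cpl_sqr_dist_le a b).
  assert (Hx := Cmod_ge_0 (cpl a b)). assert (Hl := ell_of_nonneg a b).
  assert (E4 : - 1 / 4 = - / INR 4) by (simpl; field).
  assert (E2 : - 1 / 2 = - / INR 2) by (simpl; field).
  unfold minbound. cbv zeta. rewrite E4, E2.
  set (d := Rabs (Rabs (p_of a b) - ell_of a b / sqrt 2)) in *.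
  assert (Hd0 : 0 <= d) by apply Rabs_pos.
  destruct (Req_EM_T d 0) as [_|Hd].
  - apply le_mul_Rpower_opp_inv; lra.
  - assert (0 < d) by lra.
    unfold Rmin. destruct (Rle_dec _ _); apply le_mul_Rpower_opp_inv; lra.
Qed.
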